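(* In the publishing problem, assume the delay cost is global with aggregated delay cost $F^{(d)}$ being $\frac{\sigma}{2}$-sub-additive, and the publishing cost is constant, $C^{(p)}_t(N)=\beta\,\mathbb{1}[N\neq\emptyset]$ (no assumption is made on the price dynamics $R$). Let $\pi$ be the policy $$\pi(t,Q_t,P_t)=\begin{cases}Q_t & \text{if }\gamma^{|Q_t|-1}\beta P_t\le F^{(d)}(|Q_t|+1),\\ \emptyset&\text{otherwise.}\end{cases}$$ Then $C(\pi)\le\sigma\,C(\pi^* )$, where $\pi^*$ is an optimal policy.
   Context: The publishing problem is the following infinite-horizon MDP in discrete time $t=0,1,2,\dots$. At each step $t$ a new transaction $H_t$ is created. The state at time $t$ is $(t,P_t,Q_t)$ with gas price $P_t\ge0$ and set $Q_t$ of unpublished transactions ($Q_0=\emptyset$). A policy $\pi$ chooses $N^\pi_t\subseteq Q_t$ to publish, incurring cost $C_t=P_t\,C^{(p)}_t(N^\pi_t)+C^{(d)}_t(Q_t\setminus N^\pi_t)$; then $Q_{t+1}=(Q_t\setminus N^\pi_t)\cup\{H_t\}$ and $P_{t+1}=R(P_t)$ for a random function $R$. Publishing cost: $C^{(p)}_t(N)=\alpha|N|+\beta\,\mathbb{1}[N\ne\emptyset]$, $\alpha,\beta\ge0$ (here $\alpha=0$). Delay cost: $C^{(d)}_t(N)=\sum_{H_\tau\in N}C^{(d)}_{H_\tau}(t-\tau)$ with non-negative functions $C^{(d)}_{H_\tau}$; it is global if all equal one function $C^{(d)}$. The expected total cost is $C(\pi)=\mathbb{E}[\sum_t\gamma^tC_t]$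 with $0<\gamma<1$; a policy is optimal if it minimizes $C(\pi)$. The aggregated delay cost is $F^{(d)}(n)=\sum_{t=1}^{n-1}\sum_{i=1}^{t}\gamma^{t-1}C^{(d)}(i)$. $F^{(d)}$ is $\sigma'$-sub-additive if for all $n_1,n_2\ge1$: $F^{(d)}(n_1+n_2)\le\sigma'\left(F^{(d)}(n_1+1)+\gamma^{n_1}F^{(d)}(n_2)\right)$. *)

From HB Require Import structures.
From mathcomp Require Import all_boot all_order all_algebra.
From mathcomp Require Import finmap.
From mathcomp Require Import all_classical all_reals all_analysis.
Set Implicit Arguments. Unset Strict Implicit. Unset Printing Implicit Defensive.
Import Order.TTheory GRing.Theory Num.Theory.
Local Open Scope ring_scope.
Local Open Scope fset_scope.

(* Transactions H_tau are identified with their creation time tau : nat.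
   A set of unpublished transactions is a finite set of creation times. *)

(* A (Markov) policy: maps the state (t, P_t, Q_t) to the set N_t to publish. *)
Definition policy (R : Type) := nat -> R -> {fset nat} -> {fset nat}.

Definition valid_policy (R : Type) (pi : policy R) : Prop :=
  forall t p Q, pi t p Q `<=` Q.

Definition pub_cost (R : realType) (alpha beta : R) (N : {fset nat}) : R :=
  alpha * (#|` N|)%:R + beta * (N != fset0)%:R.

Definition delay_cost (R : realType) (Cd : nat -> R) (t : nat) (N : {fset nat}) : R :=
  \sum_(tau <- N) Cd (t - tau)%N.

Fixpoint queue (R : Type) (pi : policy R) (p : nat -> R) (t : nat) : {fset nat} :=
  match t with
  | 0 => fset0
  | t'.+1 => (queue pi p t' `\` pi t' (p t') (queue pi p t')) `|` [fset t']
  end.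

Definition stage_cost (R : realType) (alpha beta : R) (Cd : nat -> R)
  (pi : policy R) (p : nat -> R) (t : nat) : R :=
  let Q := queue pi p t in
  let N := pi t (p t) Q in
  p t * pub_cost alpha beta N + delay_cost Cd t (Q `\` N).

Definition path_cost (R : realType) (gamma alpha beta : R) (Cd : nat -> R)
  (pi : policy R) (p : nat -> R) : \bar R :=
  (\sum_(0 <= t <oo) ((gamma ^+ t * stage_cost alpha beta Cd pi p t)%:E))%E.

Fixpoint price (Omega R : Type) (P0 : Omega -> R) (Rs : nat -> Omega -> R -> R)
  (w : Omega) (t : nat) : R :=
  match t with
  | 0 => P0 w
  | t'.+1 => Rs t' w (price P0 Rs w t')
  end.

Definition expected_cost (R : realType) (d : measure_display) (Omega : measurableType d)
  (Pr : probability Omega R) (P0 : Omega -> R) (Rs : nat -> Omega -> R -> R)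
  (gamma alpha beta : R) (Cd : nat -> R) (pi : policy R) : \bar R :=
  (\int[Pr]_w path_cost gamma alpha beta Cd pi (price P0 Rs w))%E.

Definition optimal_policy (R : realType) (d : measure_display) (Omega : measurableType d)
  (Pr : probability Omega R) (P0 : Omega -> R) (Rs : nat -> Omega -> R -> R)
  (gamma alpha beta : R) (Cd : nat -> R) (pi : policy R) : Prop :=
  valid_policy pi /\
  forall pi' : policy R, valid_policy pi' ->
    (expected_cost Pr P0 Rs gamma alpha beta Cd pi
       <= expected_cost Pr P0 Rs gamma alpha beta Cd pi')%E.

Definition Fd (R : realType) (gamma : R) (Cd : nat -> R) (n : nat) : R :=
  \sum_(1 <= t < n) \sum_(1 <= i < t.+1) gamma ^+ (t - 1) * Cd i.

Definition sub_additive (R : realType) (gamma sigma' : R) (F : nat -> R) : Prop :=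
  forall n1 n2 : nat, (1 <= n1)%N -> (1 <= n2)%N ->
    F (n1 + n2)%N <= sigma' * (F n1.+1 + gamma ^+ n1 * F n2).

Definition threshold_policy (R : realType) (gamma beta : R) (F : nat -> R) : policy R :=
  fun t p Q =>
    if gamma ^ ((#|` Q|)%:Z - 1) * beta * p <= F (#|` Q|).+1 then Q else fset0.

From mathcomp Require Import all_boot all_order all_algebra.
From mathcomp Require Import finmap.
From mathcomp Require Import all_classical all_reals all_analysis.
From mathcomp Require Import lra zify.
Import Order.TTheory GRing.Theory Num.Theory.
Local Open Scope ring_scope.
Set Implicit Arguments. Unset Strict Implicit.

(* The comparison holds pathwise, for every realisation of the prices and against
   every policy; integrating it gives the theorem.  Cut time at the flushes of the
   threshold policy and write [F] for [F^(d)].  In an epoch that starts after a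
   flush at [s] and ends at [T], the threshold policy pays the delays
   [g^(s+1) F (T - s)] and one publication, which its test bounds by
   [g^(s+1) F (T - s + 1)].  A competitor that stays idle during the epoch pays at
   least these delays.  Otherwise let [L] be its last publication in the epoch: the
   failed test at [L] makes that publication cost more than [g^(s+1) F (L - s + 1)],
   the delays after [L] cost [g^(L+1) F (T - L)], and the [sigma/2]-sub-additivity
   of [F] bounds [g^(s+1) F (T - s)] by [sigma/2] times their sum.  The publication
   at [T] is bounded either by the competitor's own publication at [T] or, running
   the same argument up to [T + 1], by [sigma/2] times its cost; this gives the
   factor [sigma].  When [sigma < 2], sub-additivity forces all delay costs to
   vanish, so never publishing is free, the optimal cost is [0], and the pathwise
   bound with constant [2] makes the threshold policy free as well. *)

Section ScaledBounds.
Local Open Scope ereal_scope.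

Lemma nneseries_le_scale (R : realType) (x y : nat -> R) (k : R) :
  (forall t, (0 <= x t)%R) -> (forall t, (0 <= y t)%R) -> (0 <= k)%R ->
  (forall T, (\sum_(0 <= t < T) x t <= k * \sum_(0 <= t < T) y t)%R) ->
  \sum_(0 <= t <oo) (x t)%:E <= k%:E * \sum_(0 <= t <oo) (y t)%:E.
Proof.
move=> x_ge0 y_ge0 k_ge0 partial_le.
apply: lime_le; first by apply: is_cvg_nneseries => n _ _; rewrite lee_fin.
apply: nearW => n /=; rewrite sumEFin.
apply: (@le_trans _ _ (k * \sum_(0 <= t < n) y t)%:E); first by rewrite lee_fin.
rewrite EFinM lee_wpmul2l ?lee_fin // -sumEFin.
by apply: nneseries_lim_ge => i _ _; rewrite lee_fin.
Qed.

Import HBNNSimple.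

(* No measurability is assumed: the bound goes through the definition of the
   integral of a non-negative function as a supremum over simple functions. *)
Lemma ge0_integral_le_scale d (T : measurableType d) (R : realType)
  (mu : {measure set T -> \bar R}) (f h : T -> \bar R) (k : R) :
  (forall x, 0 <= f x) -> (forall x, 0 <= h x) -> (0 < k)%R ->
  (forall x, f x <= k%:E * h x) ->
  \int[mu]_x f x <= k%:E * \int[mu]_x h x.
Proof.
move=> f_ge0 h_ge0 k_gt0 fh; rewrite !ge0_integralTE //.
apply: ge_ereal_sup => _ [s /= sf <-].
have kV_ge0 : (0 <= k^-1)%R by rewrite invr_ge0 ltW.
pose s' := scale_nnsfun s kV_ge0.
have s'_le : sintegral mu s' <= ereal_sup [set sintegral mu s0 | s0 in
    [set s0 : {nnsfun T >-> R} | forall x, (s0 x)%:E <= h x]].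
  apply: ereal_sup_ubound; exists s' => //= x.
  have := le_trans (sf x) (fh x); have := h_ge0 x.
  case: (h x) => [r|_|//] /=; last by rewrite leey.
  by rewrite !lee_fin => _ sr; rewrite ler_pdivrMl.
apply: (le_trans _ (lee_wpmul2l _ s'_le)); last by rewrite lee_fin ltW.
have -> : sintegral mu s' = (k^-1)%:E * sintegral mu s by rewrite -sintegralrM.
by rewrite muleA -EFinM mulfV ?mul1e ?gt_eqF.
Qed.

End ScaledBounds.

Definition delay_sum (R : realType) (Cd : nat -> R) (n : nat) : R :=
  \sum_(1 <= i < n.+1) Cd i.

Lemma pub_cost_alpha0 (R : realType) (beta : R) N :
  pub_cost 0 beta N = beta * (N != fset0)%:R.
Proof. by rewrite /pub_cost mul0r add0r. Qed.

Lemma delay_cost_fset0 (R : realType) (Cd : nat -> R) t : delay_cost Cd t fset0 = 0.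
Proof. exact: big_seq_fset0. Qed.

Lemma sum_window_delay (R : realType) (Cd : nat -> R) L t : (L <= t)%N ->
  \sum_(L <= tau < t) Cd (t - tau)%N = delay_sum Cd (t - L).
Proof.
move=> Lt; rewrite big_nat_rev /= /delay_sum big_add1 /=.
rewrite -{1}[L]add0n big_addn.
by apply: eq_big_nat => i /andP[_ ilt]; congr Cd; lia.
Qed.

Section AggregatedDelay.
Variables (R : realType) (g : R) (Cd : nat -> R).
Local Notation F := (Fd g Cd).

Lemma Fd1 : F 1 = 0.
Proof. by rewrite /Fd big_geq. Qed.

Lemma FdS n : (0 < n)%N -> F n.+1 = F n + g ^+ n.-1 * delay_sum Cd n.
Proof. by move=> n_gt0; rewrite /Fd big_nat_recr //= subn1 mulr_sumr. Qed.

Lemma sum_discounted_delay s T : (s < T)%N ->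
  \sum_(s.+1 <= i < T) g ^+ i * delay_sum Cd (i - s) = g ^+ s.+1 * F (T - s).
Proof.
elim: T => // T IH; rewrite ltnS leq_eqVlt => /orP[/eqP <-|sT].
  by rewrite big_geq // subSnn Fd1 mulr0.
rewrite big_nat_recr //= IH // subSn 1?ltnW // FdS ?subn_gt0 // mulrDr mulrA -exprD.
by congr (_ + _ ^+ _ * _); lia.
Qed.

Hypotheses (g_ge0 : 0 <= g) (Cd_ge0 : forall i, 0 <= Cd i).

Lemma delay_sum_ge0 n : 0 <= delay_sum Cd n.
Proof. exact: sumr_ge0. Qed.

Lemma Fd_ge0 n : 0 <= F n.
Proof. by do 2!apply: sumr_ge0 => ? _; rewrite mulr_ge0 ?exprn_ge0. Qed.

Lemma Fd_leS n : (0 < n)%N -> F n <= F n.+1.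
Proof.
by move=> n_gt0; rewrite FdS // lerDl mulr_ge0 ?exprn_ge0 ?delay_sum_ge0.
Qed.

Lemma sub_additive_le c c' :
  c <= c' -> sub_additive g c F -> sub_additive g c' F.
Proof.
move=> cc' subadd n1 n2 n1_gt0 n2_gt0; apply: (le_trans (subadd _ _ n1_gt0 n2_gt0)).
by rewrite ler_wpM2r // addr_ge0 ?Fd_ge0 ?mulr_ge0 ?exprn_ge0 ?Fd_ge0.
Qed.

End AggregatedDelay.

(* [Fd] does not involve [Cd 0], which is never incurred. *)
Lemma sub_additive_lt1_Cd0 (R : realType) (g c : R) (Cd : nat -> R) :
  0 < g -> (forall i, 0 <= Cd i) -> c < 1 -> sub_additive g c (Fd g Cd) ->
  forall i, (0 < i)%N -> Cd i = 0.
Proof.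
move=> g_gt0 Cd_ge0 c_lt1 subadd; have F_ge0 := Fd_ge0 (ltW g_gt0) Cd_ge0.
have F2_0 : Fd g Cd 2 = 0.
  have := subadd 1 1 isT isT; rewrite Fd1 mulr0 addr0 => F2_le.
  have := F_ge0 2; nra.
have F_0 n : Fd g Cd n.+1 = 0.
  elim: n => [|n IH]; first exact: Fd1.
  apply/eqP; rewrite eq_le F_ge0 andbT.
  by have := subadd 1 n.+1 isT isT; rewrite F2_0 IH mulr0 addr0 mulr0.
case=> // i _; apply/eqP; rewrite eq_le Cd_ge0 andbT.
have := FdS g Cd (ltn0Sn i); rewrite !F_0 add0r => /esym/eqP.
rewrite mulf_eq0 expf_eq0 (gt_eqF g_gt0) andbF /= /delay_sum big_nat_recr //=.
by move=> /eqP D0; rewrite -D0 lerDr sumr_ge0.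
Qed.

Lemma last_pub_exists (pub : nat -> bool) s T : (s < T)%N ->
  exists L, [/\ (s <= L < T)%N, (s < L)%N -> pub L & forall u, (L < u < T)%N -> ~~ pub u].
Proof.
elim: T => // T IH; rewrite ltnS leq_eqVlt => /orP[/eqP <-|sT].
  by exists s; split=> [||u]; rewrite ?ltnn //; lia.
case pT: (pub T).
  by exists T; split=> [||u]; rewrite ?pT //; lia.
have [L [/andP[sL LT] pubL idle]] := IH sT.
exists L; split=> [||u /andP[Lu]]; first by rewrite sL ltnW.
  exact: pubL.
by rewrite ltnS leq_eqVlt => /orP[/eqP ->|uT]; rewrite ?pT ?idle ?Lu.
Qed.

(* [b] stands for the discounted stage costs of a competing policy and [pub] for
   its publication times. *)
Section Epoch.
Variables (R : realType) (g sigma : R) (Cd b : nat -> R) (pub : nat -> bool).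
Hypotheses (g_ge0 : 0 <= g) (Cd_ge0 : forall i, 0 <= Cd i) (b_ge0 : forall t, 0 <= b t).
Hypotheses (sigma_ge2 : 2 <= sigma) (subadd : sub_additive g (sigma / 2) (Fd g Cd)).
Hypothesis b_idle : forall L t, (L < t)%N -> (forall u, (L < u < t)%N -> ~~ pub u) ->
  ~~ pub t -> g ^+ t * delay_sum Cd (t - L) <= b t.
Local Notation F := (Fd g Cd).

Lemma half_sigma_ge1 : 1 <= sigma / 2.
Proof. by rewrite ler_pdivlMr // mul1r. Qed.

Lemma idle_window_bound L T : (L < T)%N -> (forall u, (L < u < T)%N -> ~~ pub u) ->
  g ^+ L.+1 * F (T - L) <= \sum_(L.+1 <= t < T) b t.
Proof.
move=> LT idle; rewrite -sum_discounted_delay //.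
apply: ler_sum_nat => t /andP[Lt tT]; apply: b_idle => //; last by rewrite idle ?Lt.
by move=> u /andP[Lu ut]; rewrite idle // Lu (ltn_trans ut).
Qed.

(* Split at the last publication [L] of the window: before [L] the cost is at
   least [b L], after it the idle costs add up to a tail of [F]. *)
Lemma epoch_bound s T : (s < T)%N ->
  (forall t, (s < t < T)%N -> pub t -> g ^+ s.+1 * F (t - s).+1 <= b t) ->
  g ^+ s.+1 * F (T - s) <= sigma / 2 * \sum_(s.+1 <= t < T) b t.
Proof.
move=> sT b_pub.
have [L [/andP[sL LT] pubL idle]] := last_pub_exists pub sT.
have idleL := idle_window_bound LT idle.
have sum_ge0 m n : 0 <= \sum_(m <= t < n) b t by exact: sumr_ge0.
move: sL; rewrite leq_eqVlt => /orP[/eqP sL|sL'].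
  by rewrite sL; apply: (le_trans idleL); rewrite ler_peMl ?sum_ge0 ?half_sigma_ge1.
have pubL' : g ^+ s.+1 * F (L - s).+1 <= b L.
  by apply: b_pub; [rewrite sL' LT | exact: pubL].
rewrite (big_cat_nat _ (n := L)) ?(ltnW sL') 1?(ltnW LT) //=.
rewrite [\sum_(L <= i < T) _]big_ltn //=.
have split_F := subadd (n1 := (L - s)%N) (n2 := (T - L)%N) _ _.
have -> : (T - s = (L - s) + (T - L))%N by lia.
apply: (le_trans (ler_wpM2l (exprn_ge0 _ g_ge0) (split_F _ _))); try lia.
rewrite mulrCA ler_wpM2l //; first exact: le_trans half_sigma_ge1.
rewrite mulrDr mulrA -exprD (_ : (s.+1 + (L - s) = L.+1)%N); last lia.
by rewrite -[leLHS]add0r; apply: lerD => //; exact: lerD.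
Qed.

Lemma epoch_publish_bound s T x : (s < T)%N ->
  (forall t, (s < t < T)%N -> pub t -> g ^+ s.+1 * F (t - s).+1 <= b t) ->
  x <= g ^+ s.+1 * F (T - s).+1 -> (pub T -> x <= b T) ->
  g ^+ s.+1 * F (T - s) + x <= sigma * \sum_(s.+1 <= t < T.+1) b t.
Proof.
move=> sT b_pub x_le x_pub.
have sigma_ge1 : 1 <= sigma by apply: le_trans sigma_ge2; rewrite ler1n.
case pT: (pub T).
  rewrite big_nat_recr //= mulrDr; apply: lerD.
    apply: (le_trans (epoch_bound sT b_pub)); rewrite ler_wpM2r ?sumr_ge0 //.
    by rewrite ler_pdivrMr // ler_peMr ?ler1n // (le_trans _ sigma_ge1).
  by apply: (le_trans (x_pub pT)); rewrite ler_peMl.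
have b_pub' t : (s < t < T.+1)%N -> pub t -> g ^+ s.+1 * F (t - s).+1 <= b t.
  move=> /andP[st]; rewrite ltnS leq_eqVlt => /orP[/eqP->|tT]; first by rewrite pT.
  by apply: b_pub; rewrite st.
have := epoch_bound (leqW sT) b_pub'; rewrite subSn 1?ltnW // => full_le.
have F_le : g ^+ s.+1 * F (T - s) <= g ^+ s.+1 * F (T - s).+1.
  by rewrite ler_wpM2l ?exprn_ge0 ?Fd_leS ?subn_gt0.
apply: (le_trans (lerD F_le x_le)); rewrite -mulr2n -mulr_natr.
by rewrite -[sigma](@divfK _ 2) // [leRHS]mulrAC ler_wpM2r.
Qed.

End Epoch.

Section ThresholdPolicy.
Variables (R : realType) (g beta : R) (Cd p : nat -> R).
Local Notation F := (Fd g Cd).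
Local Notation thr := (threshold_policy g beta F).
Local Notation Q := (queue thr p).

Definition threshold_test t : bool :=
  g ^ ((#|` Q t|)%:Z - 1) * beta * p t <= F (#|` Q t|).+1.

Fixpoint last_flush t : nat :=
  if t is t'.+1 then (if threshold_test t' then t' else last_flush t') else 0.

Lemma threshold_policyE t : thr t (p t) (Q t) = if threshold_test t then Q t else fset0.
Proof. by []. Qed.

Lemma last_flush_le t : (last_flush t <= t)%N.
Proof. by elim: t => //= t IH; case: ifP => _; lia. Qed.

Lemma last_flush_lt t : (0 < t)%N -> (last_flush t < t)%N.
Proof. by case: t => //= t _; case: ifP => // _; rewrite ltnS last_flush_le. Qed.

Lemma mem_queue_threshold t x : (x \in Q t) = (last_flush t <= x < t)%N.
Proof.
elim: t x => [|t IH] x /=; first by rewrite inE; lia.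
rewrite threshold_policyE; have := last_flush_le t.
case: ifP => _ flush_le.
  by rewrite fsetDv in_fsetU in_fset1 inE /=; apply/eqP/idP; lia.
by rewrite fsetD0 in_fsetU in_fset1 IH; apply/orP/idP => [[|/eqP]|]; lia.
Qed.

Lemma queue_threshold_perm t : perm_eq (Q t) (index_iota (last_flush t) t).
Proof.
apply: uniq_perm; [exact: fset_uniq | exact: iota_uniq |] => x.
by rewrite mem_queue_threshold mem_index_iota.
Qed.

Lemma card_queue_threshold t : #|` Q t| = (t - last_flush t)%N.
Proof. by have := perm_size (queue_threshold_perm t); rewrite size_iota. Qed.

Lemma delay_queue_threshold t : delay_cost Cd t (Q t) = delay_sum Cd (t - last_flush t).
Proof.
rewrite /delay_cost (perm_big _ (queue_threshold_perm t)).
exact/sum_window_delay/last_flush_le.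
Qed.

Lemma threshold_stage_cost0 : stage_cost 0 beta Cd thr p 0 = 0.
Proof.
rewrite /stage_cost /= /threshold_policy.
by case: ifP => _; rewrite fsetDv pub_cost_alpha0 eqxx delay_cost_fset0 !mulr0 addr0.
Qed.

Lemma stage_cost_flush t : 0 <= beta -> 0 <= p t -> threshold_test t ->
  stage_cost 0 beta Cd thr p t <= p t * beta.
Proof.
move=> beta_ge0 pt_ge0 test; rewrite /stage_cost /= threshold_policyE test fsetDv.
rewrite delay_cost_fset0 addr0 pub_cost_alpha0 ler_wpM2l //.
by case: (_ != _); rewrite ?mulr1 ?mulr0.
Qed.

Lemma stage_cost_wait t : ~~ threshold_test t ->
  stage_cost 0 beta Cd thr p t = delay_sum Cd (t - last_flush t).
Proof.
move=> /negbTE test; rewrite /stage_cost /= threshold_policyE test fsetD0.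
by rewrite pub_cost_alpha0 eqxx mulr0 mulr0 add0r delay_queue_threshold.
Qed.

Lemma last_flush_stable T t :
  (t <= T)%N -> (last_flush T < t)%N -> last_flush t = last_flush T.
Proof.
elim: T t => [|T IH] t; first by move=> ? /=; lia.
move=> tT /=; case: ifP => test flush_lt.
  by rewrite (_ : t = T.+1) /= ?test //; lia.
move: tT; rewrite leq_eqVlt => /orP[/eqP -> /=|tT]; first by rewrite test.
exact: IH.
Qed.

Lemma threshold_test_between T t : (last_flush T < t < T)%N -> ~~ threshold_test t.
Proof.
move=> /andP[flush_lt tT]; apply/negP => test.
have := last_flush_stable tT (leq_trans flush_lt (leqnSn t)) => /=.
by rewrite test => eq_t; move: flush_lt; rewrite -eq_t ltnn.
Qed.

Lemma threshold_testE t : 0 < g -> (0 < t)%N ->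
  threshold_test t = (g ^+ t * (p t * beta) <=
                      g ^+ (last_flush t).+1 * F (t - last_flush t).+1).
Proof.
move=> g_gt0 t_gt0; have flush_lt : (last_flush t < t)%N by exact: last_flush_lt.
rewrite /threshold_test card_queue_threshold subzn; last by rewrite subn_gt0.
have -> : g ^+ t = g ^+ (last_flush t).+1 * g ^+ (t - last_flush t - 1).
  by rewrite -exprD; congr (_ ^+ _); lia.
by rewrite -exprnP -[in RHS]mulrA ler_pM2l ?exprn_gt0 // (mulrC (p t)) mulrA.
Qed.

End ThresholdPolicy.

Section PolicyCost.
Variables (R : realType) (beta : R) (Cd p : nat -> R) (B : policy R).

Definition publishes t : bool := B t (p t) (queue B p t) != fset0.

Lemma queue_lt t x : x \in queue B p t -> (x < t)%N.
Proof.
elim: t => [|t IH] /=; first by rewrite inE.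
by rewrite in_fsetU in_fsetD in_fset1 => /orP[/andP[_ /IH]|/eqP->] //; lia.
Qed.

Lemma mem_queue_idle L t : (forall u, (L < u < t)%N -> ~~ publishes u) ->
  forall x, (L <= x < t)%N -> x \in queue B p t.
Proof.
elim: t => [|t IH] idle x; first by lia.
move=> /andP[Lx]; rewrite ltnS leq_eqVlt /= in_fsetU in_fset1 => /orP[->|xt].
  by rewrite orbT.
have /negPn/eqP -> : ~~ publishes t by apply: idle; rewrite ltnSn andbT; lia.
rewrite fsetD0 IH ?Lx //.
by move=> u /andP[Lu ut]; apply: idle; rewrite Lu ltnW.
Qed.

Hypotheses (beta_ge0 : 0 <= beta) (Cd_ge0 : forall i, 0 <= Cd i) (p_ge0 : forall t, 0 <= p t).

Lemma delay_cost_ge0 t N : 0 <= delay_cost Cd t N.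
Proof. exact: sumr_ge0. Qed.

Lemma sum_le_delay_cost t (s : seq nat) (N : {fset nat}) :
  uniq s -> {subset s <= N} -> \sum_(x <- s) Cd (t - x)%N <= delay_cost Cd t N.
Proof.
move=> s_uniq sub; rewrite /delay_cost [leRHS](bigID (mem s)) /=.
rewrite -[X in _ <= X + _]big_filter.
have perm_s : perm_eq [seq x <- N | x \in s] s.
  apply: uniq_perm => [||x]; rewrite ?filter_uniq ?fset_uniq //.
  by rewrite mem_filter andb_idr //; apply: sub.
by rewrite (perm_big _ perm_s) lerDl sumr_ge0.
Qed.

Lemma stage_cost_ge0 t : 0 <= stage_cost 0 beta Cd B p t.
Proof.
by rewrite /stage_cost pub_cost_alpha0 addr_ge0 ?delay_cost_ge0 // !mulr_ge0.
Qed.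

Lemma stage_cost_publish t : publishes t -> p t * beta <= stage_cost 0 beta Cd B p t.
Proof.
by rewrite /publishes /stage_cost pub_cost_alpha0 => ->; rewrite mulr1 lerDl delay_cost_ge0.
Qed.

Lemma stage_cost_idle L t : (L < t)%N -> (forall u, (L < u < t)%N -> ~~ publishes u) ->
  ~~ publishes t -> delay_sum Cd (t - L) <= stage_cost 0 beta Cd B p t.
Proof.
move=> Lt idle /negPn/eqP; rewrite /stage_cost => ->.
rewrite pub_cost_alpha0 eqxx !mulr0 add0r fsetD0 -sum_window_delay 1?ltnW //.
apply: sum_le_delay_cost; first exact: iota_uniq.
by move=> x; rewrite mem_index_iota; apply: mem_queue_idle.
Qed.

End PolicyCost.

Section PathwiseComparison.
Variables (R : realType) (g beta sigma : R) (Cd p : nat -> R) (B : policy R).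
Hypotheses (g_gt0 : 0 < g) (beta_ge0 : 0 <= beta) (Cd_ge0 : forall i, 0 <= Cd i).
Hypothesis p_ge0 : forall t, 0 <= p t.
Local Notation F := (Fd g Cd).
Local Notation thr := (threshold_policy g beta F).
Local Notation cost pi t := (g ^+ t * stage_cost 0 beta Cd pi p t).
Local Notation flush := (last_flush g beta Cd p).

Let g_ge0 : 0 <= g. Proof. exact: ltW. Qed.

Lemma discounted_cost_ge0 pi t : 0 <= cost pi t.
Proof. by rewrite mulr_ge0 ?exprn_ge0 ?stage_cost_ge0. Qed.

Lemma path_cost_ge0 pi : (0 <= path_cost g 0 beta Cd pi p)%E.
Proof. by apply: nneseries_ge0 => t _ _; rewrite lee_fin discounted_cost_ge0. Qed.

Lemma policy_idle_cost L t : (L < t)%N -> (forall u, (L < u < t)%N -> ~~ publishes p B u) ->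
  ~~ publishes p B t -> g ^+ t * delay_sum Cd (t - L) <= cost B t.
Proof. by move=> Lt idle no_pub; rewrite ler_wpM2l ?exprn_ge0 ?stage_cost_idle. Qed.

(* Strictly between two flushes the threshold test fails: publishing costs more
   than the delay accumulated since the flush, and a policy publishing there pays it. *)
Lemma policy_publish_cost T t : (flush T < t < T)%N -> publishes p B t ->
  g ^+ (flush T).+1 * F (t - flush T).+1 <= cost B t.
Proof.
move=> /[dup] between /andP[flush_lt tT] pub.
have <- := last_flush_stable (ltnW tT) flush_lt.
have := threshold_test_between between.
rewrite threshold_testE // -?ltNge; last by apply: leq_ltn_trans flush_lt.
move=> /ltW /le_trans; apply.
by rewrite ler_wpM2l ?exprn_ge0 ?stage_cost_publish.
Qed.

Lemma sum_threshold_wait_cost T : (0 < T)%N ->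
  \sum_((flush T).+1 <= t < T) cost thr t = g ^+ (flush T).+1 * F (T - flush T).
Proof.
move=> T_gt0; rewrite -sum_discounted_delay ?last_flush_lt //.
apply: eq_big_nat => t /[dup] between /andP[flush_lt tT].
rewrite stage_cost_wait; last exact: threshold_test_between between.
by rewrite (last_flush_stable (ltnW tT) flush_lt).
Qed.

Hypotheses (sigma_ge2 : 2 <= sigma) (subadd : sub_additive g (sigma / 2) F).

Let sigma_ge0 : 0 <= sigma. Proof. exact: le_trans sigma_ge2. Qed.

Lemma flushed_cost_bound t :
  \sum_(0 <= i < (flush t).+1) cost thr i <= sigma * \sum_(0 <= i < (flush t).+1) cost B i.
Proof.
elim: t => [|t IH] /=.
  by rewrite !big_nat1 threshold_stage_cost0 mulr0 mulr_ge0 ?discounted_cost_ge0.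
case: ifP => test //.
case: (posnP t) => [t0|t_gt0]; first by rewrite t0 in IH *.
have flush_lt : (flush t < t)%N by exact: last_flush_lt.
have flush_le : (flush t < t.+1)%N by exact: ltnW.
rewrite [leLHS](big_cat_nat _ (n := (flush t).+1)) //=.
rewrite [in leRHS](big_cat_nat _ (n := (flush t).+1)) //= mulrDr lerD //.
rewrite big_nat_recr //= sum_threshold_wait_cost //.
have cost_le : cost thr t <= g ^+ t * (p t * beta).
  by rewrite ler_wpM2l ?exprn_ge0 ?stage_cost_flush.
apply: (epoch_publish_bound g_ge0 Cd_ge0 (discounted_cost_ge0 B) sigma_ge2 subadd
  policy_idle_cost flush_lt (policy_publish_cost (T := t))).
  by apply: le_trans cost_le _; rewrite -threshold_testE.
by move=> pub; apply: le_trans cost_le _; rewrite ler_wpM2l ?exprn_ge0 ?stage_cost_publish.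
Qed.

Lemma threshold_cost_bound T :
  \sum_(0 <= t < T) cost thr t <= sigma * \sum_(0 <= t < T) cost B t.
Proof.
case: (posnP T) => [->|T_gt0]; first by rewrite !big_geq // mulr0.
have flush_lt : (flush T < T)%N by exact: last_flush_lt.
rewrite [leLHS](big_cat_nat _ (n := (flush T).+1)) //=.
rewrite [in leRHS](big_cat_nat _ (n := (flush T).+1)) //= mulrDr.
rewrite lerD ?flushed_cost_bound // sum_threshold_wait_cost //.
apply: (le_trans (epoch_bound g_ge0 (discounted_cost_ge0 B) sigma_ge2 subadd
  policy_idle_cost flush_lt (policy_publish_cost (T := T)))).
rewrite ler_wpM2r ?ler_pdivrMr ?ler_peMr ?ler1n //.
by apply: sumr_ge0 => t _; exact: discounted_cost_ge0.
Qed.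

Lemma threshold_path_cost_le :
  (path_cost g 0 beta Cd thr p <= sigma%:E * path_cost g 0 beta Cd B p)%E.
Proof.
by apply: nneseries_le_scale => [t|t||]; rewrite ?discounted_cost_ge0 //; exact: threshold_cost_bound.
Qed.

End PathwiseComparison.

Lemma never_publish_path_cost (R : realType) (g beta : R) (Cd p : nat -> R) :
  (forall i, (0 < i)%N -> Cd i = 0) ->
  path_cost g 0 beta Cd (fun _ _ _ => fset0) p = 0%E.
Proof.
move=> Cd0; apply: eseries0 => t _ _; congr EFin.
rewrite /stage_cost pub_cost_alpha0 eqxx !mulr0 add0r fsetD0 /delay_cost.
rewrite big1_seq ?mulr0 // => tau /andP[_ tau_in].
by apply: Cd0; rewrite subn_gt0; apply: queue_lt tau_in.
Qed.

Section ExpectedCost.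
Variables (R : realType) (d : measure_display) (Omega : measurableType d).
Variables (Pr : probability Omega R) (P0 : Omega -> R) (Rs : nat -> Omega -> R -> R).
Variables (g beta : R) (Cd : nat -> R).
Hypotheses (g_gt0 : 0 < g) (beta_ge0 : 0 <= beta) (Cd_ge0 : forall i, 0 <= Cd i).
Hypotheses (P0_ge0 : forall w, 0 <= P0 w) (Rs_ge0 : forall t w x, 0 <= x -> 0 <= Rs t w x).
Local Notation cost pi := (expected_cost Pr P0 Rs g 0 beta Cd pi).

Lemma price_ge0 w t : 0 <= price P0 Rs w t.
Proof. by elim: t => [|t IH] /=; [exact: P0_ge0 | exact: Rs_ge0]. Qed.

Lemma expected_cost_ge0 B : (0 <= cost B)%E.
Proof. by apply: integral_ge0 => w _; apply: path_cost_ge0 => // t; apply: price_ge0. Qed.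

Lemma expected_threshold_cost_le sigma B :
  2 <= sigma -> sub_additive g (sigma / 2) (Fd g Cd) ->
  (cost (threshold_policy g beta (Fd g Cd)) <= sigma%:E * cost B)%E.
Proof.
move=> sigma_ge2 subadd; apply: ge0_integral_le_scale => [w|w||w].
- by apply: path_cost_ge0 => // t; apply: price_ge0.
- by apply: path_cost_ge0 => // t; apply: price_ge0.
- exact: lt_le_trans sigma_ge2.
by apply: threshold_path_cost_le => // t; apply: price_ge0.
Qed.

Lemma expected_cost_never_publish : (forall i, (0 < i)%N -> Cd i = 0) ->
  cost (fun _ _ _ => fset0) = 0%E.
Proof. by move=> Cd0; apply: integral0_eq => w _; apply: never_publish_path_cost. Qed.

End ExpectedCost.

Theorem theorem2 (R : realType) (d : measure_display) (Omega : measurableType d)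
  (Pr : probability Omega R) (P0 : Omega -> R) (Rs : nat -> Omega -> R -> R)
  (gamma beta sigma : R) (Cd : nat -> R) (pistar : policy R) :
  0 < gamma < 1 ->
  0 <= beta ->
  (forall i, 0 <= Cd i) ->
  (forall w, 0 <= P0 w) ->
  (forall t w x, 0 <= x -> 0 <= Rs t w x) ->
  sub_additive gamma (sigma / 2) (Fd gamma Cd) ->
  optimal_policy Pr P0 Rs gamma 0 beta Cd pistar ->
  (expected_cost Pr P0 Rs gamma 0 beta Cd (threshold_policy gamma beta (Fd gamma Cd))
     <= sigma%:E * expected_cost Pr P0 Rs gamma 0 beta Cd pistar)%E.
Proof.
move=> /andP[g_gt0 _] beta_ge0 Cd_ge0 P0_ge0 Rs_ge0 subadd [_ opt].
set E := expected_cost Pr P0 Rs gamma 0 beta Cd.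
have [sigma_ge2|sigma_lt2] := lerP 2 sigma; first exact: expected_threshold_cost_le.
have Cd0 : forall i, (0 < i)%N -> Cd i = 0.
  by apply: sub_additive_lt1_Cd0 g_gt0 Cd_ge0 _ subadd; rewrite ltr_pdivrMr ?mul1r.
have opt0 : E pistar = 0%E.
  apply/eqP; rewrite eq_le expected_cost_ge0 // andbT.
  rewrite -(expected_cost_never_publish Pr P0 Rs gamma beta Cd0).
  by apply: opt => t p Q; exact: fsub0set.
have subadd2 : sub_additive gamma (2 / 2) (Fd gamma Cd).
  by apply: sub_additive_le subadd => //; [exact: ltW | rewrite ler_pM2r // ltW].
have : (E (threshold_policy gamma beta (Fd gamma Cd)) <= 2%:E * E pistar)%E.
  exact: expected_threshold_cost_le subadd2.
by rewrite opt0 !mule0.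
Qed.
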